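(* Let $\Theta=\{1,2\}$, let $P_1,\dots,P_m$ be experiments, and let $(A,u)$ be a decision problem equivalent to $\bigoplus_{\ell=1}^k(A_\ell,u_\ell)$ for some decision problems $(A_1,u_1),\dots,(A_k,u_k)$. Let $\sigma:\mathbf Y\to\Delta(A_1\times\cdots\times A_k)$ be robustly optimal for $\bigoplus_{\ell=1}^k(A_\ell,u_\ell)$, and let $\sigma_\ell(\mathbf y)\in\Delta(A_\ell)$ denote the marginal of $\sigma(\mathbf y)$ on $A_\ell$. Then there exists $\sigma^*:\mathbf Y\to\Delta(A)$ such that $$u(\sigma^*(\mathbf y))\ge\sum_{\ell=1}^k u_\ell(\sigma_\ell(\mathbf y))\quad\text{for all }\mathbf y\in\mathbf Y,$$ and every $\sigma^*$ with this property is robustly optimal for $(A,u)$.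
   Context: $\Theta$ is a finite set of states. A decision problem is a pair $(A,u)$ with $A$ a finite nonempty action set and $u:\Theta\times A\to\mathbb{R}$; for $\alpha\in\Delta(A)$ write $u(\theta,\alpha)=\sum_a\alpha(a)u(\theta,a)$ and $u(\alpha)=(u(\theta,\alpha))_{\theta\in\Theta}\in\mathbb{R}^\Theta$; inequalities between vectors are componentwise. An experiment is a map $P:\Theta\to\Delta(Y)$ with $Y$ a finite signal set. Given experiments $P_j:\Theta\to\Delta(Y_j)$, $j=1,\dots,m$, let $\mathbf Y=Y_1\times\cdots\times Y_m$ and let $\mathcal P(P_1,\dots,P_m)$ be the set of experiments $P:\Theta\to\Delta(\mathbf Y)$ whose $j$-th marginal is $P_j(\cdot|\theta)$ for every $\theta$ and $j$. A strategy is a map $\sigma:\mathbf Y\to\Delta(A)$. Define $V(P_1,\dots,P_m;(A,u))=\max_{\sigma}\min_{P\in\mathcal P(P_1,\dots,P_m)}\sum_{\theta}\sum_{\mathbf y\in\mathbf Y}P(\mathbf y|\theta)u(\theta,\sigma(\mathbf y))$, and call a maximizing $\sigma$ robustly optimal for $(A,u)$. The composition $\bigoplus_{\ell=1}^k(A_\ell,u_\ell)$ is the decision problem with action set $A_1\times\cdots\times A_k$ and utility $u(\theta,(a_1,\dots,a_k))=\sum_{\ell}u_\ell(\theta,a_\ell)$. For a decision problem let $\mathcal H(A,u)=\mathrm{co}\{u(\cdot,a):a\in A\}-\mathbb{R}_+^{\Theta}$ (Minkowski difference). Two decision problems $(A,u)$, $(A',u')$ are equivalent if $\mathcal H(A,u)=\mathcal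 H(A',u')$. *)

From HB Require Import structures.
From mathcomp Require Import all_boot all_order all_algebra.
From mathcomp Require Import boolp classical_sets reals.
Set Implicit Arguments. Unset Strict Implicit. Unset Printing Implicit Defensive.
Import Order.TTheory GRing.Theory Num.Theory.
Local Open Scope ring_scope.
Local Open Scope classical_set_scope.

Definition is_dist (R : realType) (X : finType) (p : {ffun X -> R}) : Prop :=
  (forall x, 0 <= p x) /\ \sum_(x : X) p x = 1.

Definition expu (R : realType) (Theta A : finType) (u : Theta -> A -> R)
  (theta : Theta) (alpha : {ffun A -> R}) : R :=
  \sum_(a : A) alpha a * u theta a.

Definition is_experiment (R : realType) (Theta Y : finType)
  (P : Theta -> {ffun Y -> R}) : Prop := forall theta, is_dist (P theta).

Definition signals (m : nat) (Y : 'I_m -> finType) : finType :=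
  {dffun forall j : 'I_m, Y j}.

Definition couplings (R : realType) (Theta : finType) (m : nat)
  (Y : 'I_m -> finType) (Ps : forall j : 'I_m, Theta -> {ffun Y j -> R})
  : set (Theta -> {ffun signals Y -> R}) :=
  [set P | is_experiment P /\
     forall (theta : Theta) (j : 'I_m) (yj : Y j),
       \sum_(y : signals Y | y j == yj) P theta y = Ps j theta yj].

Definition is_strategy (R : realType) (Sg A : finType)
  (sigma : Sg -> {ffun A -> R}) : Prop := forall y, is_dist (sigma y).

Definition payoff (R : realType) (Theta Sg A : finType) (u : Theta -> A -> R)
  (P : Theta -> {ffun Sg -> R}) (sigma : Sg -> {ffun A -> R}) : R :=
  \sum_(theta : Theta) \sum_(y : Sg) P theta y * expu u theta (sigma y).

(* min over P in calP of the payoff (an inf, which is attained) *)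
Definition worst_value (R : realType) (Theta : finType) (m : nat)
  (Y : 'I_m -> finType) (Ps : forall j : 'I_m, Theta -> {ffun Y j -> R})
  (A : finType) (u : Theta -> A -> R) (sigma : signals Y -> {ffun A -> R}) : R :=
  inf [set payoff u P sigma | P in couplings Ps].

Definition robustly_optimal (R : realType) (Theta : finType) (m : nat)
  (Y : 'I_m -> finType) (Ps : forall j : 'I_m, Theta -> {ffun Y j -> R})
  (A : finType) (u : Theta -> A -> R) (sigma : signals Y -> {ffun A -> R}) : Prop :=
  is_strategy sigma /\
  forall sigma' : signals Y -> {ffun A -> R}, is_strategy sigma' ->
    worst_value Ps u sigma' <= worst_value Ps u sigma.

(* H(A,u) = co{u(.,a)} - R_+^Theta *)
Definition inH (R : realType) (Theta A : finType) (u : Theta -> A -> R)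
  (x : Theta -> R) : Prop :=
  exists alpha : {ffun A -> R}, is_dist alpha /\
    forall theta, x theta <= expu u theta alpha.

Definition equivalent_dp (R : realType) (Theta A A' : finType)
  (u : Theta -> A -> R) (u' : Theta -> A' -> R) : Prop :=
  forall x : Theta -> R, inH u x <-> inH u' x.

Definition prod_actions (k : nat) (Al : 'I_k -> finType) : finType :=
  {dffun forall l : 'I_k, Al l}.

Definition comp_u (R : realType) (Theta : finType) (k : nat)
  (Al : 'I_k -> finType) (ul : forall l : 'I_k, Theta -> Al l -> R)
  : Theta -> prod_actions Al -> R :=
  fun theta a => \sum_(l : 'I_k) ul l theta (a l).

Definition marg (R : realType) (k : nat) (Al : 'I_k -> finType)
  (alpha : {ffun prod_actions Al -> R}) (l : 'I_k) : {ffun Al l -> R} :=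
  [ffun al : Al l => \sum_(a : prod_actions Al | a l == al) alpha a].

From HB Require Import structures.
From mathcomp Require Import all_boot all_order all_algebra.
From mathcomp Require Import boolp classical_sets reals.
Import Order.TTheory GRing.Theory Num.Theory.
Local Open Scope ring_scope.

(* The worst-case value of a strategy only depends on the vectors
   of expected utilities u(sigma(y)) it produces, and it is monotone in them:
   a strategy that is pointwise (in y and theta) better than another has a
   larger worst-case value.  Two equivalent decision problems have the same set
   H of dominated utility vectors, so any strategy of one problem is pointwise
   dominated by some strategy of the other (pick, for each signal, a mixed
   action witnessing membership in H).  Hence an equivalent problem inherits
   robust optimality from any robustly optimal strategy it dominates.  Finally
   the expected utility of a mixed action in a composition (+)_l (A_l,u_l) is
   the sum of the expected utilities of its marginals, which turns both
   assertions of the theorem into instances of these two facts. *)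

Section WorstValue.
Context {R : realType}.
Local Open Scope classical_set_scope.

Lemma inf_image_mono (T : Type) (C : set T) (f g : T -> R) :
  (C !=set0 -> has_lbound [set f x | x in C]) ->
  (forall x, C x -> f x <= g x) ->
  inf [set f x | x in C] <= inf [set g x | x in C].
Proof.
move=> f_lb le_fg; have [C_ne|C_empty] := pselect (C !=set0); last first.
  have -> : C = set0 by apply/seteqP; split=> x // Cx; apply: C_empty; exists x.
  by rewrite !image_set0.
apply: lb_le_inf; first by case: C_ne => x Cx; exists (g x), x.
move=> _ [x Cx <-]; apply: le_trans (le_fg x Cx).
by apply: (ge_inf (f_lb C_ne)); exists x.
Qed.

Lemma le_sum_term {X : finType} (F : X -> R) (x : X) :
  (forall z, 0 <= F z) -> F x <= \sum_z F z.
Proof. by move=> F_ge0; rewrite (bigD1 x) //= lerDl sumr_ge0. Qed.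

Lemma expu_ge (Theta A : finType) (u : Theta -> A -> R) (theta : Theta)
    (alpha : {ffun A -> R}) (c : R) :
  is_dist alpha -> (forall a, c <= u theta a) -> c <= expu u theta alpha.
Proof.
move=> [alpha_ge0 alpha_sum1] c_le.
have -> : c = \sum_a alpha a * c by rewrite -mulr_suml alpha_sum1 mul1r.
by apply: ler_sum => a _; apply: ler_wpM2l.
Qed.

(* The payoffs of a strategy over all couplings are bounded below, so the
   infimum defining [worst_value] is a genuine lower bound. *)
Lemma payoff_bounded_below (Theta : finType) (m : nat) (Y : 'I_m -> finType)
    (Ps : forall j : 'I_m, Theta -> {ffun Y j -> R})
    (A : finType) (u : Theta -> A -> R) (s : signals Y -> {ffun A -> R}) :
  is_strategy s -> has_lbound [set payoff u P s | P in couplings Ps].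
Proof.
move=> s_strat; exists (\sum_theta - \sum_a `|u theta a|) => _ [P [P_exp _] <-].
apply: ler_sum => theta _; have [P_ge0 P_sum1] := P_exp theta.
have -> : - \sum_a `|u theta a| = \sum_y P theta y * - \sum_a `|u theta a|.
  by rewrite -mulr_suml P_sum1 mul1r.
apply: ler_sum => y _; apply: ler_wpM2l => //; apply: expu_ge => // a.
rewrite lerNl; apply: le_trans _ (le_sum_term _ a (fun z => normr_ge0 (u theta z))).
by rewrite -normrN ler_norm.
Qed.

Lemma worst_value_mono {Theta : finType} {m : nat} {Y : 'I_m -> finType}
    (Ps : forall j : 'I_m, Theta -> {ffun Y j -> R})
    {A A' : finType} {u : Theta -> A -> R} {v : Theta -> A' -> R}
    {s1 : signals Y -> {ffun A -> R}} {s2 : signals Y -> {ffun A' -> R}} :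
  is_strategy s1 ->
  (forall y theta, expu u theta (s1 y) <= expu v theta (s2 y)) ->
  worst_value Ps u s1 <= worst_value Ps v s2.
Proof.
move=> s1_strat le_s12; apply: inf_image_mono => [_|P [P_exp _]].
  exact: payoff_bounded_below.
apply: ler_sum => theta _; apply: ler_sum => y _.
by apply: ler_wpM2l (le_s12 y theta); case: (P_exp theta).
Qed.

End WorstValue.

(* Every strategy for (A',v) is pointwise dominated by a strategy for (A,u):
   u'(s(y)) lies in H(A',v) = H(A,u). *)
Lemma equivalent_dominating_strategy {R : realType} {Theta A A' Sg : finType}
    {u : Theta -> A -> R} {v : Theta -> A' -> R} {s : Sg -> {ffun A' -> R}} :
  equivalent_dp u v -> is_strategy s ->
  exists s' : Sg -> {ffun A -> R}, is_strategy s' /\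
    forall y theta, expu v theta (s y) <= expu u theta (s' y).
Proof.
move=> u_equiv_v s_strat.
have dominated y : exists alpha : {ffun A -> R}, is_dist alpha /\
    forall theta, expu v theta (s y) <= expu u theta alpha.
  by apply/(u_equiv_v (fun theta => expu v theta (s y))); exists (s y).
have [s' s'_dom] := choice dominated.
by exists s'; split=> [y|y theta]; case: (s'_dom y).
Qed.

Lemma equivalent_robustly_optimal {R : realType} {Theta A A' : finType}
    {u : Theta -> A -> R} {v : Theta -> A' -> R} {m : nat} {Y : 'I_m -> finType}
    {Ps : forall j : 'I_m, Theta -> {ffun Y j -> R}}
    {sigma : signals Y -> {ffun A' -> R}} {sigma' : signals Y -> {ffun A -> R}} :
  equivalent_dp u v -> robustly_optimal Ps v sigma -> is_strategy sigma' ->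
  (forall y theta, expu v theta (sigma y) <= expu u theta (sigma' y)) ->
  robustly_optimal Ps u sigma'.
Proof.
move=> u_equiv_v [sigma_strat sigma_opt] sigma'_strat sigma'_dom; split=> // s s_strat.
have v_equiv_u : equivalent_dp v u by move=> x; apply: iff_sym.
have [t [t_strat t_dom]] := equivalent_dominating_strategy v_equiv_u s_strat.
have s_le_t := worst_value_mono Ps s_strat t_dom.
have sigma_le_sigma' := worst_value_mono Ps sigma_strat sigma'_dom.
exact: le_trans s_le_t (le_trans (sigma_opt t t_strat) sigma_le_sigma').
Qed.

Lemma expu_comp_u {R : realType} {Theta : finType} {k : nat}
    {Al : 'I_k -> finType} (ul : forall l : 'I_k, Theta -> Al l -> R)
    (theta : Theta) (alpha : {ffun prod_actions Al -> R}) :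
  expu (comp_u ul) theta alpha =
  \sum_(l : 'I_k) expu (ul l) theta (marg alpha l).
Proof.
rewrite /expu /comp_u; under eq_bigr do rewrite mulr_sumr.
rewrite exchange_big /=; apply: eq_bigr => l _.
under [RHS]eq_bigr do rewrite ffunE mulr_suml.
rewrite (partition_big (fun a : prod_actions Al => a l) predT) //=.
by apply: eq_bigr => al _; apply: eq_bigr => a /eqP <-.
Qed.

Theorem lemma5 (R : realType) (m : nat) (Y : 'I_m -> finType)
  (Ps : forall j : 'I_m, 'I_2 -> {ffun Y j -> R})
  (HPs : forall j : 'I_m, is_experiment (Ps j))
  (A : finType) (u : 'I_2 -> A -> R) (HA : (0 < #|A|)%N)
  (k : nat) (Al : 'I_k -> finType) (HAl : forall l : 'I_k, (0 < #|Al l|)%N)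
  (ul : forall l : 'I_k, 'I_2 -> Al l -> R)
  (Heq : equivalent_dp u (comp_u ul))
  (sigma : signals Y -> {ffun prod_actions Al -> R})
  (Hsigma : robustly_optimal Ps (comp_u ul) sigma) :
  (exists sigma_star : signals Y -> {ffun A -> R},
     is_strategy sigma_star /\
     forall (y : signals Y) (theta : 'I_2),
       \sum_(l : 'I_k) expu (ul l) theta (marg (sigma y) l)
         <= expu u theta (sigma_star y)) /\
  (forall sigma_star : signals Y -> {ffun A -> R},
     is_strategy sigma_star ->
     (forall (y : signals Y) (theta : 'I_2),
        \sum_(l : 'I_k) expu (ul l) theta (marg (sigma y) l)
          <= expu u theta (sigma_star y)) ->
     robustly_optimal Ps u sigma_star).
Proof.
split.
  have [s [s_strat s_dom]] :=
    equivalent_dominating_strategy Heq (proj1 Hsigma).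
  by exists s; split=> // y theta; rewrite -expu_comp_u; apply: s_dom.
move=> s s_strat s_dom.
apply: (equivalent_robustly_optimal Heq Hsigma s_strat) => y theta.
by rewrite expu_comp_u; apply: s_dom.
Qed.
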